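(* Let $0<a<1$ and let $w^*_n(a)$, $n\ge0$, be the rational functions of $(r,y,z)$ defined in the context. Then for all $n\ge1$, $$w^*_n(a)^2-w^*_{n+1}(a)w^*_{n-1}(a)=a^2(1-a)^2r^2z^4x_a^{\,n-2}.$$
   Context: Let $r,y,z$ be indeterminates. For $c\in(0,1)$ put $\omega_c:=1-(1-c)^2r^2y^2z^2$, $\tau_c:=1+(1-c)^2r^2z^2y(1-y)$, $x_c:=c^2z^2\tau_c^2$, $\beta_c:=1+z^2\big(c^2-(1-c)^2r^2(y^2+c^2(1-y)^2z^2)\big)$. Define $w^*_0(c):=(\beta_c-\omega_c)/x_c$, $w^*_1(c):=1$, and $w^*_{n+1}(c):=\beta_cw^*_n(c)-x_cw^*_{n-1}(c)$ for $n\ge1$ (so $w^*_2(c)=\omega_c$). *)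

From mathcomp Require Import all_boot all_order all_algebra.
Set Implicit Arguments. Unset Strict Implicit. Unset Printing Implicit Defensive.
Import Order.TTheory GRing.Theory Num.Theory.
Local Open Scope ring_scope.

Section WStar.
Variable R : fieldType.
Variables (c r y z : R).

Definition omega_c : R := 1 - (1 - c) ^+ 2 * r ^+ 2 * y ^+ 2 * z ^+ 2.
Definition tau_c : R := 1 + (1 - c) ^+ 2 * r ^+ 2 * z ^+ 2 * y * (1 - y).
Definition x_c : R := c ^+ 2 * z ^+ 2 * tau_c ^+ 2.
Definition beta_c : R :=
  1 + z ^+ 2 * (c ^+ 2 - (1 - c) ^+ 2 * r ^+ 2 * (y ^+ 2 + c ^+ 2 * (1 - y) ^+ 2 * z ^+ 2)).

(* pair (w*_n, w*_{n+1}) *)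
Fixpoint wstar_pair (n : nat) : R * R :=
  match n with
  | 0%N => ((beta_c - omega_c) / x_c, 1)
  | k.+1 => let p := wstar_pair k in (p.2, beta_c * p.2 - x_c * p.1)
  end.

Definition wstar (n : nat) : R := (wstar_pair n).1.
End WStar.

From mathcomp Require Import all_boot all_order all_algebra.
From mathcomp Require Import ring.
Set Implicit Arguments. Unset Strict Implicit. Unset Printing Implicit Defensive.
Import Order.TTheory GRing.Theory Num.Theory.
Local Open Scope ring_scope.

(* The Casoratian [D n := w (n+1)^2 - w (n+2) w n] of a three-term recurrence
   [w (n+2) = b w (n+1) - x w n] is multiplied by [x] at each step, so
   [D n = x^n D 0].  For [w*], the initial value [D 0 = 1 - omega (beta - omega) / x]
   equals [c^2 (1-c)^2 r^2 z^4 / x] by a polynomial identity. *)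

Section Casoratian.
Variable R : comPzRingType.
Variables (b x : R) (w : nat -> R).
Hypothesis w_rec : forall n, w n.+2 = b * w n.+1 - x * w n.

Definition casoratian n := w n.+1 ^+ 2 - w n.+2 * w n.

Lemma casoratianS n : casoratian n.+1 = x * casoratian n.
Proof. by rewrite /casoratian (w_rec n.+1) (w_rec n); ring. Qed.

Lemma casoratian_geometric n : casoratian n = x ^+ n * casoratian 0.
Proof.
elim: n => [|n IHn]; first by rewrite expr0 mul1r.
by rewrite casoratianS IHn exprS mulrA.
Qed.

End Casoratian.

Section WStar.
Variable R : fieldType.
Variables (c r y z : R).

Local Notation w := (wstar c r y z).
Local Notation x := (x_c c r y z).
Local Notation beta := (beta_c c r y z).
Local Notation omega := (omega_c c r y z).

Lemma wstarSS n : w n.+2 = beta * w n.+1 - x * w n.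
Proof. by []. Qed.

Lemma x_c_sub_omega_mul :
  x - omega * (beta - omega) = c ^+ 2 * (1 - c) ^+ 2 * r ^+ 2 * z ^+ 4.
Proof. by rewrite /x_c /tau_c /omega_c /beta_c; ring. Qed.

Lemma casoratian_wstar0 : x != 0 ->
  casoratian w 0 = c ^+ 2 * (1 - c) ^+ 2 * r ^+ 2 * z ^+ 4 / x.
Proof.
by move=> x_neq0; rewrite -x_c_sub_omega_mul /casoratian /wstar /=; field.
Qed.

End WStar.

Theorem lemma1 (R : realFieldType) (a r y z : R) (n : nat) :
  0 < a -> a < 1 -> x_c a r y z != 0 -> (1 <= n)%N ->
  wstar a r y z n ^+ 2 - wstar a r y z n.+1 * wstar a r y z n.-1
  = a ^+ 2 * (1 - a) ^+ 2 * r ^+ 2 * z ^+ 4 * x_c a r y z ^ (n%:Z - 2).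
Proof.
move=> _ _ x_neq0; case: n => // m _.
have x_pow : x_c a r y z ^ (m.+1%:Z - 2) = x_c a r y z ^+ m / x_c a r y z.
  have -> : (m.+1%:Z - 2 = m%:Z + -1)%R by rewrite -addn1 PoszD -addrA.
  by rewrite expfzDr // expr1z.
rewrite x_pow [LHS](casoratian_geometric (wstarSS a r y z)) casoratian_wstar0 //.
by rewrite mulrC -!mulrA [_^-1 * _]mulrC.
Qed.
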